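(* For any $\beta\in[0,\infty)$ there exists a weight sequence $\boldsymbol{M}^\beta$ such that: (i) $\boldsymbol{M}^\beta$ does not satisfy $\operatorname{(sm)}$ (and hence not $\operatorname{(dc)}$ either); (ii) $\gamma(\boldsymbol{M}^\beta)=\beta$.
   Context: A weight sequence is a sequence $\boldsymbol{M}=(M_p)_{p\in\mathbb{N}_0}$ of positive reals with $M_0=1$, $M_p^2\le M_{p-1}M_{p+1}$ ($p\ge1$) and $m_p=M_{p+1}/M_p\to\infty$. $\operatorname{(sm)}$: $\log(m_{p+1}/m_p)\le C_0H^{p+1}$ for all $p$, some $C_0>0$, $H>1$. $\operatorname{(dc)}$: $M_{p+1}\le C_0H^{p+1}M_p$ for all $p$, some $C_0>0$, $H>1$. Almost increasing: $c_p\le ac_q$ for $q\ge p$, some $a>0$. $\gamma(\boldsymbol{M})=\sup\{\mu>0:(m_p/(p+1)^\mu)_p\text{ almost increasing}\}\in[0,\infty]$. *)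

From Stdlib Require Import Reals.
Open Scope R_scope.

Definition quot (M : nat -> R) (p : nat) : R := M (S p) / M p.

Definition weight_seq (M : nat -> R) : Prop :=
  M O = 1 /\
  (forall p, 0 < M p) /\
  (forall p, (1 <= p)%nat -> (M p) ^ 2 <= M (p - 1)%nat * M (p + 1)%nat) /\
  (forall A : R, exists N : nat, forall p, (N <= p)%nat -> A < quot M p).

Definition cond_sm (M : nat -> R) : Prop :=
  exists C0 H : R, 0 < C0 /\ 1 < H /\
    forall p : nat, ln (quot M (S p) / quot M p) <= C0 * H ^ (S p).

Definition cond_dc (M : nat -> R) : Prop :=
  exists C0 H : R, 0 < C0 /\ 1 < H /\
    forall p : nat, M (S p) <= C0 * H ^ (S p) * M p.

Definition almost_increasing (c : nat -> R) : Prop :=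
  exists a : R, 0 < a /\ forall p q : nat, (p <= q)%nat -> c p <= a * c q.

Definition gamma_set (M : nat -> R) (mu : R) : Prop :=
  0 < mu /\ almost_increasing (fun p => quot M p / Rpower (INR p + 1) mu).

(* gamma(M) = beta (beta finite, >= 0), with the convention sup of the empty
   set = 0 since gamma(M) is in [0,oo]: beta is the lub of {0} U gamma_set M. *)
Definition gamma_eq (M : nat -> R) (beta : R) : Prop :=
  is_lub (fun x => x = 0 \/ gamma_set M x) beta.

From Stdlib Require Import Reals Lra Lia.
Open Scope R_scope.

(* Let T range over the numbers 2^(2^k) and let Q_p be the largest such T
   with T <= p.  Take m_p = (p+1)^beta * exp (E_p) with E_p = exp (Q_p^2).
   Since E is nondecreasing, m_p / (p+1)^mu is nondecreasing for mu <= beta.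
   For mu > beta it is not almost increasing: E is constant on each block
   [T, T^2 - 1], across which (p+1)^(beta-mu) decreases by a factor of
   about T^(mu-beta).  At p = T^2, E jumps from
   exp (T^2) to exp (T^4), so log (m_p / m_(p-1)) is not O(H^p) and (sm)
   fails; (dc) fails too, since it implies (sm) for every weight sequence. *)

Lemma exp_le_exp x y : x <= y -> exp x <= exp y.
Proof. intros [Hlt| ->]; [now left; apply exp_increasing | apply Rle_refl]. Qed.

Lemma exp_le_inv x y : exp x <= exp y -> x <= y.
Proof.
  intros Hle; destruct (Rle_or_lt x y) as [|Hlt]; [assumption|].
  apply exp_increasing in Hlt; lra.
Qed.

Lemma ln_le_ln x y : 0 < x -> x <= y -> ln x <= ln y.
Proof. intros Hx [Hlt| ->]; [now left; apply ln_increasing | apply Rle_refl]. Qed.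

Lemma ln_INR_succ_le p q : (p <= q)%nat -> ln (INR p + 1) <= ln (INR q + 1).
Proof.
  intros Hpq; apply le_INR in Hpq.
  apply ln_le_ln; pose proof (pos_INR p); lra.
Qed.

Fixpoint seq_of_quot (m : nat -> R) (p : nat) : R :=
  match p with
  | O => 1
  | S p => seq_of_quot m p * m p
  end.

Section SeqOfQuot.
Variable m : nat -> R.
Hypothesis m_pos : forall p, 0 < m p.

Lemma seq_of_quot_pos p : 0 < seq_of_quot m p.
Proof. induction p; simpl; [lra | now apply Rmult_lt_0_compat]. Qed.

Lemma quot_seq_of_quot p : quot (seq_of_quot m) p = m p.
Proof.
  unfold quot; simpl; field.
  apply Rgt_not_eq, seq_of_quot_pos.
Qed.

Hypothesis m_nondecreasing : forall p q, (p <= q)%nat -> m p <= m q.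
Hypothesis m_unbounded : forall A, exists N, forall p, (N <= p)%nat -> A < m p.

Lemma weight_seq_seq_of_quot : weight_seq (seq_of_quot m).
Proof.
  split; [reflexivity|]; split; [exact seq_of_quot_pos|]; split.
  - intros [|p] Hp; [lia|].
    replace (S p - 1)%nat with p by lia; replace (S p + 1)%nat with (S (S p)) by lia.
    simpl.
    pose proof (seq_of_quot_pos p); pose proof (m_pos p).
    pose proof (m_nondecreasing p (S p) (Nat.le_succ_diag_r p)).
    assert (0 < seq_of_quot m p * seq_of_quot m p * m p) by (repeat apply Rmult_lt_0_compat; auto).
    nra.
  - intros A; destruct (m_unbounded A) as [N HN]; exists N; intros p Hp.
    rewrite quot_seq_of_quot; auto.
Qed.

End SeqOfQuot.

Lemma quot_pos M : (forall p, 0 < M p) -> forall p, 0 < quot M p.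
Proof. intros HM p; unfold quot; apply Rdiv_lt_0_compat; auto. Qed.

Lemma quot_nondecreasing M :
  weight_seq M -> forall p q, (p <= q)%nat -> quot M p <= quot M q.
Proof.
  intros (_ & HM & Hlc & _).
  assert (Hstep : forall p, quot M p <= quot M (S p)).
  { intros p; specialize (Hlc (S p) ltac:(lia)).
    replace (S p - 1)%nat with p in Hlc by lia.
    replace (S p + 1)%nat with (S (S p)) in Hlc by lia.
    pose proof (HM p); pose proof (HM (S p)).
    unfold quot; apply (Rmult_le_reg_r (M p * M (S p))); [nra|].
    replace (M (S p) / M p * (M p * M (S p))) with (M (S p) ^ 2) by (field; lra).
    replace (M (S (S p)) / M (S p) * (M p * M (S p))) with (M p * M (S (S p))) by (field; lra).
    exact Hlc. }
  intros p q Hpq; induction Hpq as [|q _ IH]; [apply Rle_refl|].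
  eapply Rle_trans; [exact IH | apply Hstep].
Qed.

(* (dc) bounds [ln m_p] by a linear function of [p], and [m_p >= m_0] since [M] is log-convex. *)
Lemma dc_sm M : weight_seq M -> cond_dc M -> cond_sm M.
Proof.
  intros HW (C0 & H & HC0 & HH & Hdc).
  pose proof (quot_pos M (proj1 (proj2 HW))) as Hq.
  assert (Hm : forall p, quot M p <= C0 * H ^ S p).
  { intros p; pose proof (proj1 (proj2 HW) p).
    unfold quot; apply (Rmult_le_reg_r (M p)); [assumption|].
    replace (M (S p) / M p * M p) with (M (S p)) by (field; lra).
    apply Hdc. }
  set (A := ln C0 - ln (quot M 0)); set (B := ln H).
  exists (Rabs A + Rabs B + 1), 2; split; [pose proof (Rabs_pos A); pose proof (Rabs_pos B); lra|].
  split; [lra|]; intros p.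
  assert (Hln : ln (quot M (S p) / quot M p) <= A + INR (S (S p)) * B).
  { unfold Rdiv; rewrite ln_mult, ln_Rinv; auto; [|apply Rinv_0_lt_compat; auto].
    assert (ln (quot M (S p)) <= ln C0 + INR (S (S p)) * B).
    { unfold B; rewrite <- ln_pow, <- ln_mult by (try apply pow_lt; lra).
      apply ln_le_ln; auto. }
    assert (ln (quot M 0) <= ln (quot M p)).
    { apply ln_le_ln; auto; apply quot_nondecreasing; auto; lia. }
    unfold A; lra. }
  assert (Hlin : INR (S (S p)) <= 2 ^ S p).
  { replace 2 with (INR 2) by (simpl; lra); rewrite <- pow_INR.
    apply le_INR, Nat.pow_gt_lin_r; lia. }
  assert (H1 : 1 <= 2 ^ S p) by (apply pow_R1_Rle; lra).
  pose proof (Rle_abs A); pose proof (Rle_abs B); pose proof (Rabs_pos A); pose proof (Rabs_pos B).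
  pose proof (pos_INR (S (S p))).
  assert (A <= Rabs A * 2 ^ S p) by nra.
  assert (INR (S (S p)) * B <= Rabs B * 2 ^ S p).
  { apply Rle_trans with (INR (S (S p)) * Rabs B); [apply Rmult_le_compat_l; auto | nra]. }
  lra.
Qed.

Section GammaIndex.
Variables (M : nat -> R) (beta : R).
Hypothesis M_pos : forall p, 0 < M p.

Let f (p : nat) : R := quot M p / Rpower (INR p + 1) beta.

Lemma quot_div_Rpower_shift mu p :
  quot M p / Rpower (INR p + 1) mu = f p * Rpower (INR p + 1) (beta - mu).
Proof.
  unfold f, Rminus; rewrite Rpower_plus, !Rpower_Ropp.
  unfold Rpower; field; split; apply exp_neq_0.
Qed.

Lemma gamma_set_of_le :
  (forall p q, (p <= q)%nat -> f p <= f q) ->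
  forall mu, 0 < mu -> mu <= beta -> gamma_set M mu.
Proof.
  intros Hf mu Hmu Hle; split; [assumption|].
  exists 1; split; [lra|]; intros p q Hpq.
  rewrite !quot_div_Rpower_shift, Rmult_1_l.
  assert (Hfp : 0 < f p) by (apply Rdiv_lt_0_compat; [apply quot_pos | apply exp_pos]; auto).
  assert (Hpow : Rpower (INR p + 1) (beta - mu) <= Rpower (INR q + 1) (beta - mu)).
  { apply le_INR in Hpq; pose proof (pos_INR p).
    apply Rle_Rpower_l; lra. }
  apply Rmult_le_compat; auto; [lra | unfold Rpower; left; apply exp_pos].
Qed.

(* If [f P = f (P^2 - 1)], almost increasingness with constant [a] forces
   [P^(mu-beta) <= a * 2^(mu-beta)], which fails for large [P]. *)
Lemma le_of_gamma_set :
  (forall N, exists P, (N <= P)%nat /\ f (P * P - 1)%nat = f P) ->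
  forall mu, gamma_set M mu -> mu <= beta.
Proof.
  intros Hflat mu (_ & a & Ha & Hai).
  destruct (Rle_or_lt mu beta) as [|Hlt]; [assumption|]; exfalso.
  set (d := mu - beta).
  destruct (INR_unbounded (exp (ln a / d + ln 2))) as [N HN].
  destruct (Hflat (Nat.max 2 N)) as (P & HP & Hf).
  set (x := INR P).
  assert (Hx2 : 2 <= x) by (apply (le_INR 2); lia).
  assert (HxN : INR N <= x) by (apply le_INR; lia).
  specialize (Hai P (P * P - 1)%nat ltac:(nia)).
  rewrite !quot_div_Rpower_shift, Hf in Hai.
  assert (Hsq : INR (P * P - 1) + 1 = x * x).
  { rewrite minus_INR, mult_INR by nia; unfold x; simpl; ring. }
  rewrite Hsq in Hai; fold x in Hai.
  assert (Hfp : 0 < f P) by (apply Rdiv_lt_0_compat; [apply quot_pos | apply exp_pos]; auto).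
  assert (Hpow : Rpower (x + 1) (beta - mu) <= a * Rpower (x * x) (beta - mu)).
  { apply (Rmult_le_reg_l (f P)); [assumption | lra]. }
  unfold Rpower in Hpow; rewrite <- (exp_ln a), <- exp_plus in Hpow by assumption.
  apply exp_le_inv in Hpow.
  rewrite ln_mult in Hpow by lra.
  assert (Hln1 : ln (x + 1) <= ln 2 + ln x) by (rewrite <- ln_mult by lra; apply ln_le_ln; lra).
  assert (Hlnx : ln a / d + ln 2 < ln x).
  { rewrite <- (ln_exp (ln a / d + ln 2)); apply ln_increasing; [apply exp_pos | lra]. }
  assert (Hd : 0 < d) by (unfold d; lra).
  assert (d * (ln a / d) = ln a) by (field; lra).
  replace (beta - mu) with (- d) in Hpow by (unfold d; ring).
  nra.
Qed.

Lemma gamma_eq_of_flat_stretches :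
  0 <= beta ->
  (forall p q, (p <= q)%nat -> f p <= f q) ->
  (forall N, exists P, (N <= P)%nat /\ f (P * P - 1)%nat = f P) ->
  gamma_eq M beta.
Proof.
  intros Hbeta Hf Hflat; split.
  - intros x [->|Hx]; [assumption | exact (le_of_gamma_set Hflat x Hx)].
  - intros b Hb; destruct Hbeta as [Hpos| <-].
    + apply Hb; right; apply gamma_set_of_le; auto; lra.
    + apply Hb; left; reflexivity.
Qed.

End GammaIndex.

Definition tower (k : nat) : nat := 2 ^ 2 ^ k.

(* The largest [tower k <= p] when [2 <= p], and [2] when [p < 2]. *)
Definition tower_floor (p : nat) : nat := tower (Nat.log2 (Nat.log2 p)).

Lemma tower_succ k : tower (S k) = (tower k * tower k)%nat.
Proof. unfold tower; rewrite <- Nat.pow_add_r; f_equal; simpl; lia. Qed.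

Lemma lt_tower n : (n < tower n)%nat.
Proof.
  pose proof (Nat.pow_gt_lin_r 2 n ltac:(lia)).
  unfold tower; eapply Nat.lt_le_trans; [eassumption|].
  apply Nat.pow_le_mono_r; lia.
Qed.

Lemma tower_ge2 k : (2 <= tower k)%nat.
Proof.
  unfold tower; change 2%nat with (2 ^ 1)%nat at 1.
  apply Nat.pow_le_mono_r; [lia|].
  apply Nat.neq_0_lt_0, Nat.pow_nonzero; lia.
Qed.

Lemma tower_floor_tower k : tower_floor (tower k) = tower k.
Proof. unfold tower_floor, tower; rewrite !Nat.log2_pow2; lia. Qed.

Lemma tower_floor_pred_tower_succ k : tower_floor (tower (S k) - 1) = tower k.
Proof.
  unfold tower_floor, tower.
  rewrite Nat.sub_1_r, !Nat.log2_pred_pow2; [reflexivity | lia |].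
  apply Nat.neq_0_lt_0, Nat.pow_nonzero; lia.
Qed.

Lemma tower_floor_mono p q : (p <= q)%nat -> (tower_floor p <= tower_floor q)%nat.
Proof.
  intros Hpq; unfold tower_floor, tower.
  apply Nat.pow_le_mono_r, Nat.pow_le_mono_r, Nat.log2_le_mono, Nat.log2_le_mono; lia.
Qed.

Lemma lt_sq_tower_floor p : (p < tower_floor p * tower_floor p)%nat.
Proof.
  unfold tower_floor; rewrite <- tower_succ; unfold tower.
  assert (Hp : (p < 2 ^ S (Nat.log2 p))%nat).
  { destruct p; [simpl; lia | apply Nat.log2_spec; lia]. }
  assert (Hlog : (Nat.log2 p < 2 ^ S (Nat.log2 (Nat.log2 p)))%nat).
  { destruct (Nat.log2 p); [simpl; lia | apply Nat.log2_spec; lia]. }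
  eapply Nat.lt_le_trans; [exact Hp|].
  apply Nat.pow_le_mono_r; lia.
Qed.

Lemma pow_lt_exp_sq C H :
  0 < C -> 0 < H -> exists N, forall n, (N <= n)%nat -> C * H ^ n < exp (INR n ^ 2).
Proof.
  intros HC HH.
  destruct (INR_unbounded (Rabs (ln C) + Rabs (ln H) + 1)) as [N HN].
  exists N; intros n Hn; apply le_INR in Hn.
  rewrite <- Rpower_pow by assumption; unfold Rpower.
  rewrite <- (exp_ln C), <- exp_plus by assumption.
  apply exp_increasing.
  pose proof (Rle_abs (ln C)); pose proof (Rle_abs (ln H)).
  pose proof (Rabs_pos (ln C)); pose proof (Rabs_pos (ln H)).
  assert (INR n * ln H <= INR n * Rabs (ln H)) by (apply Rmult_le_compat_l; lra).
  nra.
Qed.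

Definition stair (p : nat) : R := exp (INR (tower_floor p) ^ 2).

Lemma stair_nondecreasing p q : (p <= q)%nat -> stair p <= stair q.
Proof.
  intros Hpq; apply exp_le_exp, pow_incr; split; [apply pos_INR|].
  apply le_INR, tower_floor_mono, Hpq.
Qed.

Lemma INR_lt_stair p : INR p < stair p.
Proof.
  unfold stair; pose proof (exp_ineq1_le (INR (tower_floor p) ^ 2)).
  apply Rlt_le_trans with (INR (tower_floor p) ^ 2); [|lra].
  rewrite <- pow_INR, Nat.pow_2_r.
  apply lt_INR, lt_sq_tower_floor.
Qed.

Lemma stair_flat k : stair (tower k * tower k - 1) = stair (tower k).
Proof.
  unfold stair; rewrite <- tower_succ, tower_floor_pred_tower_succ, tower_floor_tower.
  reflexivity.
Qed.

Lemma stair_jump k :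
  exp (INR (tower (S k)) ^ 2) / 2 <= stair (tower (S k)) - stair (tower (S k) - 1).
Proof.
  unfold stair; rewrite tower_floor_tower, tower_floor_pred_tower_succ.
  set (x := INR (tower (S k))).
  assert (Hsq : INR (tower k) ^ 2 = x) by (unfold x; rewrite tower_succ, mult_INR; ring).
  assert (Hx : 4 <= x).
  { unfold x; rewrite tower_succ, mult_INR; pose proof (le_INR _ _ (tower_ge2 k)); simpl in *; nra. }
  rewrite Hsq.
  replace (exp (x ^ 2)) with (exp x * exp (x ^ 2 - x)) by (rewrite <- exp_plus; f_equal; ring).
  assert (2 <= exp (x ^ 2 - x)) by (pose proof (exp_ineq1_le (x ^ 2 - x)); nra).
  pose proof (exp_pos x); nra.
Qed.

Section Construction.
Variable beta : R.
Hypothesis beta_ge0 : 0 <= beta.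

Definition quot_beta (p : nat) : R := exp (beta * ln (INR p + 1) + stair p).

Definition M_beta : nat -> R := seq_of_quot quot_beta.

Lemma quot_beta_nondecreasing p q : (p <= q)%nat -> quot_beta p <= quot_beta q.
Proof.
  intros Hpq; apply exp_le_exp.
  pose proof (Rmult_le_compat_l _ _ _ beta_ge0 (ln_INR_succ_le p q Hpq)).
  pose proof (stair_nondecreasing p q Hpq); lra.
Qed.

Lemma INR_lt_quot_beta p : INR p < quot_beta p.
Proof.
  assert (0 <= beta * ln (INR p + 1)).
  { apply Rmult_le_pos; [assumption|].
    rewrite <- ln_1; apply ln_le_ln; pose proof (pos_INR p); lra. }
  pose proof (INR_lt_stair p).
  pose proof (exp_ineq1_le (beta * ln (INR p + 1) + stair p)).
  unfold quot_beta; lra.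
Qed.

Lemma weight_seq_M_beta : weight_seq M_beta.
Proof.
  apply weight_seq_seq_of_quot; [intros; apply exp_pos | exact quot_beta_nondecreasing|].
  intros A; destruct (INR_unbounded A) as [N HN]; exists N; intros p Hp.
  apply le_INR in Hp; pose proof (INR_lt_quot_beta p); lra.
Qed.

Lemma stair_succ_le_ln_quot_ratio p :
  stair (S p) - stair p <= ln (quot M_beta (S p) / quot M_beta p).
Proof.
  unfold M_beta; rewrite !quot_seq_of_quot by (intros; apply exp_pos).
  unfold quot_beta, Rdiv; rewrite <- exp_Ropp, <- exp_plus, ln_exp.
  pose proof (Rmult_le_compat_l _ _ _ beta_ge0 (ln_INR_succ_le p (S p) (Nat.le_succ_diag_r p))).
  lra.
Qed.

Lemma not_sm_M_beta : ~ cond_sm M_beta.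
Proof.
  intros (C0 & H & HC0 & HH & Hsm).
  destruct (pow_lt_exp_sq (2 * C0) H) as [N HN]; [lra | lra |].
  set (P := tower (S N)).
  assert (HNP : (N <= P)%nat) by (pose proof (lt_tower (S N)); unfold P; lia).
  assert (HSP : S (P - 1) = P) by (pose proof (tower_ge2 (S N)); unfold P; lia).
  specialize (Hsm (P - 1)%nat); rewrite HSP in Hsm.
  pose proof (stair_succ_le_ln_quot_ratio (P - 1)) as Hratio; rewrite HSP in Hratio.
  pose proof (stair_jump N) as Hjump; fold P in Hjump.
  specialize (HN P HNP).
  lra.
Qed.

Lemma gamma_eq_M_beta : gamma_eq M_beta beta.
Proof.
  assert (HM : forall p, 0 < M_beta p) by (apply seq_of_quot_pos; intros; apply exp_pos).
  assert (Hf : forall p, quot M_beta p / Rpower (INR p + 1) beta = exp (stair p)).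
  { intros p; unfold M_beta; rewrite quot_seq_of_quot by (intros; apply exp_pos).
    unfold quot_beta, Rpower; rewrite exp_plus; field; apply exp_neq_0. }
  apply gamma_eq_of_flat_stretches; auto; intros; rewrite ?Hf.
  - apply exp_le_exp, stair_nondecreasing; assumption.
  - exists (tower N); split; [apply Nat.lt_le_incl, lt_tower|].
    rewrite !Hf, stair_flat; reflexivity.
Qed.

End Construction.

Theorem corollary4p13 (beta : R) (hbeta : 0 <= beta) :
  exists M : nat -> R,
    weight_seq M /\ ~ cond_sm M /\ ~ cond_dc M /\ gamma_eq M beta.
Proof.
  exists (M_beta beta); split; [|split; [|split]].
  - apply weight_seq_M_beta; assumption.
  - apply not_sm_M_beta; assumption.
  - intros Hdc; apply (not_sm_M_beta beta hbeta), dc_sm; auto.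
    apply weight_seq_M_beta; assumption.
  - apply gamma_eq_M_beta; assumption.
Qed.
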